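(* Let $d\ge1$, $\vec\gamma\in\mathbb{C}^d$, and let $b,\beta_1,\beta_2\in\mathbb{C}$ be nonzero. For nonzero $\beta\in\mathbb{C}$ and $\vec\delta\in\mathbb{C}^d$, and a point $\alpha\in L$ with $1+b\alpha^{\beta}=0$, let $\phi(\vec a;\vec\delta,b,\beta)$ denote a smooth map from a neighborhood of $\vec 0\in\mathbb{C}^d$ to $L$ satisfying $\phi(\vec 0;\vec\delta,b,\beta)=\alpha$ and \[ 1+b\,\phi(\vec a;\vec\delta,b,\beta)^{\beta}+\sum_{i=1}^d a_i\,\phi(\vec a;\vec\delta,b,\beta)^{\delta_i}=0 \] for all $\vec a$ in that neighborhood. Let $\alpha_1\in L$ satisfy $1+b\alpha_1^{\beta_1}=0$ and let $\phi(\vec a;\vec\gamma,b,\beta_1)$ be such a map with $\phi(\vec 0)=\alpha_1$. Let $\alpha_2\in L$ be the point with $\log\alpha_2=\beta_2^{-1}\log\alpha_1$ (so $\alpha_2=\alpha_1^{1/\beta_2}$), and let $\phi(\vec a;\beta_2\vec\gamma,b,\beta_2\beta_1)$ be such a map with exponents $\beta_2\vec\gamma$ and $\beta_2\beta_1$ and with $\phi(\vec 0)=\alpha_2$. Then, as Taylor series about $\vec a=\vec 0$, \[ \phi(\vec a;\vec\gamma,b,\beta_1)^{1/\beta_2}=\phi(\vec a;\beta_2\vec\gamma,b,\beta_2\beta_1). \]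
   Context: $L$ is the Riemann surface of the logarithm, parametrized by triples $(r,\theta,n)$ with $r>0$, $\theta\in(-\pi,\pi]$, $n\in\mathbb{Z}$; for $z=(r,\theta,n)\in L$ and $\gamma\in\mathbb{C}$, $z^\gamma=e^{\gamma\ln r+i\gamma\theta+2\pi i n\gamma}$, and $\log z=\ln r+i\theta+2\pi i n$ (a bijection $L\to\mathbb{C}$). Taylor series of $L$-valued maps are taken in the local coordinate $z\mapsto z^1$. Note $1+b\alpha_2^{\beta_2\beta_1}=1+b\alpha_1^{\beta_1}=0$. *)

From Stdlib Require Import Reals ZArith List.
From Coquelicot Require Import Coquelicot.
Open Scope R_scope.

Definition cexp (z : C) : C := (exp (Re z) * cos (Im z), exp (Re z) * sin (Im z)).

(* The Riemann surface of the logarithm: triples (r, theta, n),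
   r > 0, theta in (-pi, pi], n in Z. *)
Record Lpt : Type := mkL {
  Lr : R; Lth : R; Ln : Z;
  Lr_pos : 0 < Lr;
  Lth_rng : - PI < Lth <= PI }.

Definition Llog (z : Lpt) : C := (ln (Lr z), Lth z + 2 * PI * IZR (Ln z)).

Definition Lpow (z : Lpt) (g : C) : C := cexp (g * Llog z)%C.

(* Points of C^d are modelled as nat -> C vanishing at indices >= d. *)
Fixpoint csum (n : nat) (f : nat -> C) : C :=
  match n with O => RtoC 0 | S m => (csum m f + f m)%C end.

Definition vzero : nat -> C := fun _ => RtoC 0.
Definition vscal (c : C) (v : nat -> C) : nat -> C := fun i => (c * v i)%C.

Definition cube (d : nat) (eps : R) (a : nat -> C) : Prop :=
  (forall i, (i < d)%nat -> Cmod (a i) < eps) /\ (forall i, (d <= i)%nat -> a i = RtoC 0).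

(* real coordinate directions of C^d = R^{2d}: (i, false) = Re a_i, (i, true) = Im a_i *)
Definition dir (i : nat) (k : bool) : nat -> C :=
  fun j => if Nat.eqb j i then (if k then Ci else RtoC 1) else RtoC 0.

Definition shift (a : nat -> C) (t : R) (i : nat) (k : bool) : nat -> C :=
  fun j => (a j + RtoC t * dir i k j)%C.

Definition pd (ik : nat * bool) (F : (nat -> C) -> C) (a : nat -> C) : C :=
  (Derive.Derive (fun t => Re (F (shift a t (fst ik) (snd ik)))) 0,
   Derive.Derive (fun t => Im (F (shift a t (fst ik) (snd ik)))) 0).

Fixpoint iterD (vs : list (nat * bool)) (F : (nat -> C) -> C) : (nat -> C) -> C :=
  match vs with
  | nil => F
  | v :: ws => pd v (iterD ws F)
  end.

Definition dirs_ok (d : nat) (vs : list (nat * bool)) : Prop :=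
  List.Forall (fun ik => (fst ik < d)%nat) vs.

Definition cont_on_cube (d : nat) (eps : R) (F : (nat -> C) -> C) : Prop :=
  forall a, cube d eps a -> forall e, 0 < e -> exists delta, 0 < delta /\
    forall a', cube d eps a' -> (forall i, (i < d)%nat -> Cmod (a' i - a i)%C < delta) ->
      Cmod (F a' - F a)%C < e.

Definition smooth_on_cube (d : nat) (eps : R) (F : (nat -> C) -> C) : Prop :=
  forall vs, dirs_ok d vs ->
    cont_on_cube d eps (iterD vs F) /\
    forall a, cube d eps a -> forall i k, (i < d)%nat ->
      ex_derive (fun t => Re (iterD vs F (shift a t i k))) 0 /\
      ex_derive (fun t => Im (iterD vs F (shift a t i k))) 0.

(* Smoothness of an L-valued map: via the global holomorphic chart log : L -> C. *)
Definition smoothL_on_cube (d : nat) (eps : R) (phi : (nat -> C) -> Lpt) : Prop :=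
  smooth_on_cube d eps (fun a => Llog (phi a)).

Definition is_phi (d : nat) (delta : nat -> C) (b beta : C) (alpha : Lpt)
  (phi : (nat -> C) -> Lpt) : Prop :=
  exists eps, 0 < eps /\ smoothL_on_cube d eps phi /\ phi vzero = alpha /\
    forall a, cube d eps a ->
      (RtoC 1 + b * Lpow (phi a) beta + csum d (fun i => a i * Lpow (phi a) (delta i)))%C
        = RtoC 0.

(* Equality of Taylor series about 0 (in the real coordinates of C^d):
   all iterated partial derivatives at 0 coincide (order 0 included). *)
Definition same_taylor0 (d : nat) (F G : (nat -> C) -> C) : Prop :=
  forall vs, dirs_ok d vs -> iterD vs F vzero = iterD vs G vzero.

(* Taking logarithms, z = log phi(a) solves 1 + b e^(beta z) + sum_i a_i e^(gamma_i z) = 0.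
   Rescaling z by beta2 turns the exponents (beta2 gamma, beta2 beta1) into (gamma, beta1),
   so both log phi1 and beta2 log phi2 solve the equation with exponents (gamma, beta1)
   and take the value log alpha1 at a = 0. Its z-derivative b beta1 e^(beta1 z) does not
   vanish, so for small a the root near log alpha1 is unique; by continuity the two maps
   agree near 0, hence phi1^(1/beta2) = phi2 on a neighbourhood of 0 and all Taylor
   coefficients coincide. *)

From Pilot Require Import Defs.
From Stdlib Require Import Reals List Lra Psatz.
From Coquelicot Require Import Coquelicot.
Open Scope R_scope.

Lemma sin_bounds_01 y : 0 <= y <= 1 -> y - y ^ 3 / 6 <= sin y <= y.
Proof.
  intros Hy.
  assert (HPI : 1 <= PI) by (pose proof PI2_1; lra).
  destruct (sin_bound y 0 ltac:(lra) ltac:(lra)) as [Hlb Hub].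
  unfold sin_approx, sin_term in Hlb, Hub; simpl in Hlb, Hub.
  match type of Hub with context [_ / ?D] =>
    lazymatch D with 1 + 1 + 1 + 1 + 1 + 1 => fail | _ => replace D with 120 in Hub by ring end end.
  replace (1 + 1 + 1 + 1 + 1 + 1) with 6 in Hlb, Hub by ring.
  replace (y * (y * (y * (y * (y * 1))))) with (y ^ 5) in Hub by ring.
  replace (y * (y * (y * 1))) with (y ^ 3) in Hlb, Hub by ring.
  assert (Hy3 : 0 <= y ^ 3) by (apply pow_le; lra).
  assert (y ^ 5 <= y ^ 3).
  { replace (y ^ 5) with (y ^ 3 * (y * y)) by ring.
    rewrite <- (Rmult_1_r (y ^ 3)) at 2; apply Rmult_le_compat_l; nra. }
  split; lra.
Qed.

Lemma sin_approx_small y :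
  Rabs y <= 1 -> Rabs (sin y) <= Rabs y /\ Rabs (sin y - y) <= Rabs y ^ 3 / 6.
Proof.
  intros Hy.
  assert (HPI : 1 <= PI) by (pose proof PI2_1; lra).
  destruct (Rle_dec 0 y) as [Hpos | Hneg].
  - pose proof (sin_bounds_01 y ltac:(split_Rabs; lra)).
    assert (0 <= sin y) by (apply sin_ge_0; split_Rabs; lra).
    rewrite (Rabs_pos_eq y Hpos). split; split_Rabs; lra.
  - pose proof (sin_bounds_01 (- y) ltac:(split_Rabs; lra)).
    assert (0 <= sin (- y)) by (apply sin_ge_0; split_Rabs; lra).
    rewrite sin_neg in *. rewrite (Rabs_left y ltac:(lra)).
    replace ((- y) ^ 3) with (- y ^ 3) in * by ring.
    split; split_Rabs; lra.
Qed.

Lemma cos_approx_small y : Rabs y <= 1 -> Rabs (cos y - 1) <= y ^ 2 / 2.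
Proof.
  intros Hy.
  replace y with (2 * (y / 2)) at 1 by field. rewrite cos_2a_sin.
  destruct (sin_approx_small (y / 2) ltac:(split_Rabs; lra)) as [Hs _].
  assert (Hsq : Rabs (sin (y / 2)) * Rabs (sin (y / 2)) <= Rabs (y / 2) * Rabs (y / 2))
    by (apply Rmult_le_compat; auto using Rabs_pos).
  rewrite <- !Rabs_mult, !Rabs_pos_eq in Hsq by nra.
  rewrite Rabs_left1 by nra. nra.
Qed.

Lemma exp_approx_small x : Rabs x <= 1 / 2 -> Rabs (exp x - 1 - x) <= 2 * x ^ 2.
Proof.
  intros Hx.
  pose proof (exp_ineq1_le x) as Hlow. pose proof (exp_ineq1_le (- x)) as Hlow'.
  assert (Hinv : exp x * exp (- x) = 1)
    by (rewrite <- exp_plus, Rplus_opp_r; apply exp_0).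
  (* [exp x <= 1 + x + 2 x^2] follows from [exp x * (1 - x) <= exp x * exp (- x) = 1]. *)
  assert (Hup : exp x * (1 - x) <= (1 + x + 2 * x ^ 2) * (1 - x)).
  { assert (exp x * (1 - x) <= 1).
    { rewrite <- Hinv. apply Rmult_le_compat_l; [left; apply exp_pos | lra]. }
    assert (0 <= x ^ 2 * (1 - 2 * x)) by (apply Rmult_le_pos; [apply pow2_ge_0 | split_Rabs; lra]).
    nra. }
  apply Rmult_le_reg_r in Hup; [|split_Rabs; lra].
  rewrite Rabs_pos_eq; lra.
Qed.

Lemma Cmod_le_Rabs_re_im (z : C) : Cmod z <= Rabs (Re z) + Rabs (Im z).
Proof.
  destruct z as [x y].
  replace (x, y) with (RtoC x + RtoC y * Ci)%C
    by (unfold RtoC, Ci, Cplus, Cmult; simpl; f_equal; ring).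
  eapply Rle_trans; [apply Cmod_triangle|].
  rewrite Cmod_mult, Cmod_Ci, !Cmod_R, Rmult_1_r.
  unfold Re, Im; simpl. right; f_equal; f_equal; ring.
Qed.

Lemma im_le_Cmod (z : C) : Rabs (Im z) <= Cmod z.
Proof. eapply Rle_trans; [|apply Rmax_Cmod]. apply Rmax_r. Qed.

Lemma cexp_add p q : cexp (p + q)%C = (cexp p * cexp q)%C.
Proof.
  destruct p as [x y], q as [u v]. unfold cexp, Cplus, Cmult; simpl.
  rewrite exp_plus, cos_plus, sin_plus. f_equal; ring.
Qed.

Lemma Cmod_cexp z : Cmod (cexp z) = exp (Re z).
Proof.
  destruct z as [x y]. unfold cexp, Cmod, Re; simpl.
  replace (exp x * cos y * (exp x * cos y * 1) + exp x * sin y * (exp x * sin y * 1))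
    with (exp x ^ 2 * ((sin y)² + (cos y)²)) by (unfold Rsqr; ring).
  rewrite sin2_cos2, Rmult_1_r. apply sqrt_pow2. left; apply exp_pos.
Qed.

Lemma cexp_approx_small h :
  Cmod h <= 1 / 2 -> Cmod (cexp h - RtoC 1 - h)%C <= 4 * Cmod h ^ 2.
Proof.
  intros Hh.
  pose proof (re_le_Cmod h) as Hx. pose proof (im_le_Cmod h) as Hy.
  rewrite Cmod2_alt.
  eapply Rle_trans; [apply Cmod_le_Rabs_re_im|].
  destruct h as [x y]; unfold Re, Im in *; simpl in *.
  unfold cexp, Cminus, Cplus, Copp, RtoC; simpl.
  pose proof (exp_approx_small x ltac:(lra)) as Hexp.
  pose proof (cos_approx_small y ltac:(lra)) as Hcos.
  destruct (sin_approx_small y ltac:(lra)) as [Hsin Hsin'].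
  pose proof (COS_bound y) as Hcos1.
  pose proof (Rabs_pos x); pose proof (Rabs_pos y).
  assert (Ex : x ^ 2 = Rabs x * Rabs x) by (rewrite <- Rabs_mult, Rabs_pos_eq; nra).
  assert (Ey : y ^ 2 = Rabs y * Rabs y) by (rewrite <- Rabs_mult, Rabs_pos_eq; nra).
  replace (exp x * cos y + - (1) + - x)
    with ((exp x - 1 - x) * cos y + (1 + x) * (cos y - 1)) by ring.
  replace (exp x * sin y + - 0 + - y) with ((exp x - 1) * sin y + (sin y - y)) by ring.
  eapply Rle_trans; [apply Rplus_le_compat; apply Rabs_triang|].
  rewrite !Rabs_mult.
  assert (Rabs (cos y) <= 1) by (split_Rabs; lra).
  assert (Rabs (1 + x) <= 3 / 2) by (split_Rabs; lra).
  assert (Rabs (exp x - 1) <= 2 * Rabs x) by (split_Rabs; nra).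
  assert (Rabs (exp x - 1 - x) * Rabs (cos y) <= 2 * x ^ 2 * 1)
    by (apply Rmult_le_compat; auto using Rabs_pos).
  assert (Rabs (1 + x) * Rabs (cos y - 1) <= 3 / 2 * (y ^ 2 / 2))
    by (apply Rmult_le_compat; auto using Rabs_pos).
  assert (Rabs (exp x - 1) * Rabs (sin y) <= 2 * Rabs x * Rabs y)
    by (apply Rmult_le_compat; auto using Rabs_pos).
  assert (Rabs y ^ 3 / 6 <= y ^ 2).
  { replace (Rabs y ^ 3) with (Rabs y * y ^ 2) by (rewrite Ey; ring).
    pose proof (pow2_ge_0 y). nra. }
  assert (2 * Rabs x * Rabs y <= x ^ 2 + y ^ 2)
    by (pose proof (pow2_ge_0 (Rabs x - Rabs y)); nra).
  nra.
Qed.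

Lemma cexp_sub_1_lower h : Cmod h <= 1 / 8 -> Cmod h / 2 <= Cmod (cexp h - RtoC 1)%C.
Proof.
  intros Hh. pose proof (cexp_approx_small h ltac:(lra)). pose proof (Cmod_ge_0 h).
  assert (Cmod h <= Cmod (cexp h - RtoC 1)%C + Cmod (cexp h - RtoC 1 - h)%C).
  { replace h with ((cexp h - RtoC 1) + - (cexp h - RtoC 1 - h))%C at 1 by ring.
    rewrite <- (Cmod_opp (cexp h - RtoC 1 - h)%C). apply Cmod_triangle. }
  nra.
Qed.

Lemma cexp_sub_1_upper h : Cmod h <= 1 / 2 -> Cmod (cexp h - RtoC 1)%C <= 3 * Cmod h.
Proof.
  intros Hh. pose proof (cexp_approx_small h Hh). pose proof (Cmod_ge_0 h).
  replace (cexp h - RtoC 1)%C with ((cexp h - RtoC 1 - h) + h)%C by ring.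
  pose proof (Cmod_triangle (cexp h - RtoC 1 - h)%C h). nra.
Qed.

Lemma exp_le_compat x y : x <= y -> exp x <= exp y.
Proof.
  intros [Hlt | ->]; [left; apply exp_increasing; exact Hlt | right; reflexivity].
Qed.

Lemma Cmod_cexp_mul_bounds (g w : C) (G A : R) :
  Cmod g <= G -> Cmod w <= A -> exp (- (G * A)) <= Cmod (cexp (g * w)) <= exp (G * A).
Proof.
  intros Hg Hw. rewrite Cmod_cexp.
  pose proof (re_le_Cmod (g * w)%C) as Hre. rewrite Cmod_mult in Hre.
  assert (Cmod g * Cmod w <= G * A) by (apply Rmult_le_compat; auto using Cmod_ge_0).
  split; apply exp_le_compat; split_Rabs; lra.
Qed.

Lemma cexp_mul_sub (g w w' : C) :
  (cexp (g * w) - cexp (g * w'))%C = (cexp (g * w') * (cexp (g * (w - w')) - RtoC 1))%C.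
Proof.
  replace (g * w)%C with (g * w' + g * (w - w'))%C by ring. rewrite cexp_add. ring.
Qed.

Lemma cexp_mul_sub_lower (g w w' : C) (G A : R) :
  Cmod g <= G -> Cmod w' <= A -> Cmod (g * (w - w')) <= 1 / 8 ->
  exp (- (G * A)) * Cmod (g * (w - w')) / 2 <= Cmod (cexp (g * w) - cexp (g * w'))%C.
Proof.
  intros Hg Hw Hd.
  rewrite cexp_mul_sub, (Cmod_mult (cexp (g * w'))).
  destruct (Cmod_cexp_mul_bounds g w' G A Hg Hw) as [Hlow _].
  pose proof (cexp_sub_1_lower _ Hd). pose proof (Cmod_ge_0 (g * (w - w'))).
  unfold Rdiv. rewrite Rmult_assoc.
  apply Rmult_le_compat; auto; [left; apply exp_pos | lra].
Qed.

Lemma cexp_mul_sub_upper (g w w' : C) (G A : R) :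
  Cmod g <= G -> Cmod w' <= A -> Cmod (g * (w - w')) <= 1 / 2 ->
  Cmod (cexp (g * w) - cexp (g * w'))%C <= 3 * exp (G * A) * Cmod (g * (w - w')).
Proof.
  intros Hg Hw Hd.
  rewrite cexp_mul_sub, (Cmod_mult (cexp (g * w'))).
  destruct (Cmod_cexp_mul_bounds g w' G A Hg Hw) as [_ Hup].
  pose proof (cexp_sub_1_upper _ Hd).
  replace (3 * exp (G * A) * Cmod (g * (w - w'))) with (exp (G * A) * (3 * Cmod (g * (w - w'))))
    by ring.
  apply Rmult_le_compat; auto using Cmod_ge_0.
Qed.

Lemma csum_ext n f g : (forall i, (i < n)%nat -> f i = g i) -> csum n f = csum n g.
Proof.
  induction n as [|n IH]; intros Hfg; simpl; auto.
  rewrite IH by (intros; apply Hfg; lia). rewrite Hfg by lia. reflexivity.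
Qed.

Lemma csum_sub n f g : (csum n f - csum n g)%C = csum n (fun i => f i - g i)%C.
Proof. induction n as [|n IH]; simpl; [ring|]. rewrite <- IH. ring. Qed.

Lemma Cmod_csum_le n f c :
  (forall i, (i < n)%nat -> Cmod (f i) <= c) -> Cmod (csum n f) <= INR n * c.
Proof.
  induction n as [|n IH]; intros Hf.
  - simpl. rewrite Cmod_0; lra.
  - rewrite S_INR; cbn [csum]. eapply Rle_trans; [apply Cmod_triangle|].
    pose proof (IH (fun i Hi => Hf i ltac:(lia))). pose proof (Hf n ltac:(lia)). lra.
Qed.

Lemma finite_family_bounded n (f : nat -> C) :
  exists M, forall i, (i < n)%nat -> Cmod (f i) <= M.
Proof.
  induction n as [|n [M HM]].
  - exists 0. intros; lia.
  - exists (Rmax M (Cmod (f n))). intros i Hi.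
    destruct (Nat.eq_dec i n) as [->|Hne]; [apply Rmax_r|].
    eapply Rle_trans; [apply HM; lia | apply Rmax_l].
Qed.

Definition near0 (d : nat) (P : (nat -> C) -> Prop) : Prop :=
  exists rho, 0 < rho /\ forall a, cube d rho a -> P a.

Lemma cube_vzero d eps : 0 < eps -> cube d eps vzero.
Proof. intros Heps; split; intros; unfold vzero; [rewrite Cmod_0; exact Heps | reflexivity]. Qed.

Lemma cube_mono d rho eps a : rho <= eps -> cube d rho a -> cube d eps a.
Proof. intros Hle [Hin Hout]; split; [intros i Hi; specialize (Hin i Hi); lra | exact Hout]. Qed.

Lemma near0_and d (P Q : (nat -> C) -> Prop) :
  near0 d P -> near0 d Q -> near0 d (fun a => P a /\ Q a).
Proof.
  intros [rP [HrP HP]] [rQ [HrQ HQ]]. exists (Rmin rP rQ).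
  split; [apply Rmin_glb_lt; assumption|].
  intros a Ha. split; [apply HP | apply HQ]; eapply cube_mono; eauto; [apply Rmin_l | apply Rmin_r].
Qed.

Lemma near0_impl d (P Q : (nat -> C) -> Prop) :
  (forall a, P a -> Q a) -> near0 d P -> near0 d Q.
Proof. intros HPQ [r [Hr HP]]. exists r. auto. Qed.

Definition exp_poly (d : nat) (gam : nat -> C) (b beta : C) (a : nat -> C) (z : C) : C :=
  (RtoC 1 + b * cexp (beta * z) + csum d (fun i => a i * cexp (gam i * z)))%C.

Lemma exp_poly_sub d gam b beta a z z' :
  (exp_poly d gam b beta a z - exp_poly d gam b beta a z')%C =
  (b * (cexp (beta * z) - cexp (beta * z')) +
   csum d (fun i => a i * (cexp (gam i * z) - cexp (gam i * z'))))%C.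
Proof.
  unfold exp_poly.
  rewrite (csum_ext d (fun i => a i * (cexp (gam i * z) - cexp (gam i * z')))%C
             (fun i => a i * cexp (gam i * z) - a i * cexp (gam i * z'))%C)
    by (intros; ring).
  rewrite <- csum_sub. ring.
Qed.

Lemma exp_poly_sub_lower d gam b beta a z z' G A delta :
  Cmod beta <= G -> (forall i, (i < d)%nat -> Cmod (gam i) <= G) ->
  (forall i, (i < d)%nat -> Cmod (a i) <= delta) ->
  Cmod z' <= A -> G * Cmod (z - z') <= 1 / 8 ->
  (Cmod b * Cmod beta * exp (- (G * A)) / 2 - INR d * delta * 3 * exp (G * A) * G)
    * Cmod (z - z')
  <= Cmod (exp_poly d gam b beta a z - exp_poly d gam b beta a z')%C.
Proof.
  intros Hbeta Hgam Ha Hz' HD.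
  assert (Hsmall : forall g, Cmod g <= G -> Cmod (g * (z - z')) <= 1 / 8).
  { intros g Hg. rewrite Cmod_mult. pose proof (Cmod_ge_0 (z - z')).
    pose proof (Cmod_ge_0 g). nra. }
  rewrite exp_poly_sub.
  set (X := (b * (cexp (beta * z) - cexp (beta * z')))%C).
  set (Y := csum d (fun i => a i * (cexp (gam i * z) - cexp (gam i * z')))%C).
  assert (HX : Cmod b * Cmod beta * exp (- (G * A)) / 2 * Cmod (z - z') <= Cmod X).
  { unfold X. rewrite Cmod_mult.
    pose proof (cexp_mul_sub_lower beta z z' G A Hbeta Hz' (Hsmall beta Hbeta)) as Hl.
    rewrite Cmod_mult in Hl.
    apply Rle_trans with (Cmod b * (exp (- (G * A)) * (Cmod beta * Cmod (z - z')) / 2));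
      [right; field | apply Rmult_le_compat_l; auto using Cmod_ge_0]. }
  assert (HY : Cmod Y <= INR d * delta * 3 * exp (G * A) * G * Cmod (z - z')).
  { unfold Y. eapply Rle_trans.
    - apply (Cmod_csum_le d _ (delta * (3 * exp (G * A) * (G * Cmod (z - z'))))).
      intros i Hi. rewrite Cmod_mult.
      apply Rmult_le_compat; auto using Cmod_ge_0.
      pose proof (Hsmall _ (Hgam i Hi)).
      eapply Rle_trans; [apply (cexp_mul_sub_upper _ _ _ G A (Hgam i Hi) Hz'); lra|].
      rewrite Cmod_mult.
      apply Rmult_le_compat_l; [pose proof (exp_pos (G * A)); lra|].
      apply Rmult_le_compat_r; auto using Cmod_ge_0.
    - right; ring. }
  assert (Cmod X <= Cmod (X + Y)%C + Cmod Y).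
  { replace X with ((X + Y) + - Y)%C at 1 by ring.
    rewrite <- (Cmod_opp Y). apply Cmod_triangle. }
  lra.
Qed.

Lemma exponents_bounded d (gam : nat -> C) (beta : C) :
  exists G, 1 <= G /\ Cmod beta <= G /\ forall i, (i < d)%nat -> Cmod (gam i) <= G.
Proof.
  destruct (finite_family_bounded d gam) as [G0 HG0].
  exists (Rmax 1 (Rmax G0 (Cmod beta))). split; [apply Rmax_l | split].
  - eapply Rle_trans; [apply Rmax_r | apply Rmax_r].
  - intros i Hi. eapply Rle_trans; [apply HG0, Hi|].
    eapply Rle_trans; [apply Rmax_l | apply Rmax_r].
Qed.

(* The z-derivative [b beta e^(beta z)] of [exp_poly] does not vanish near [z0], while the
   perturbation by the [a_i] is Lipschitz in z with constant O(max |a_i|). *)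
Lemma exp_poly_root_locally_unique d gam b beta z0 :
  b <> RtoC 0 -> beta <> RtoC 0 ->
  exists r, 0 < r /\ near0 d (fun a => forall z z',
    Cmod (z - z0) < r -> Cmod (z' - z0) < r ->
    exp_poly d gam b beta a z = RtoC 0 -> exp_poly d gam b beta a z' = RtoC 0 -> z = z').
Proof.
  intros Hb Hbeta.
  destruct (exponents_bounded d gam beta) as [G [HG1 [HGbeta HGgam]]].
  set (A := Cmod z0 + 1).
  set (K := Cmod b * Cmod beta * exp (- (G * A))).
  assert (HK : 0 < K).
  { apply Rmult_lt_0_compat; [apply Rmult_lt_0_compat; apply Cmod_gt_0; auto | apply exp_pos]. }
  pose proof (pos_INR d) as Hd. pose proof (exp_pos (G * A)) as HeGA.
  set (delta := K / (12 * (INR d + 1) * G * exp (G * A))).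
  assert (Hcoef : K / 4 <= K / 2 - INR d * delta * 3 * exp (G * A) * G).
  { replace (INR d * delta * 3 * exp (G * A) * G) with (K / 4 * (INR d / (INR d + 1)))
      by (unfold delta; field; lra).
    assert (INR d / (INR d + 1) <= 1) by (apply (Rdiv_le_1 (INR d) (INR d + 1)); lra).
    nra. }
  exists (1 / (16 * G)). split; [apply Rdiv_lt_0_compat; lra|].
  exists delta. split.
  { apply Rdiv_lt_0_compat; [lra|].
    apply Rmult_lt_0_compat; [apply Rmult_lt_0_compat; lra | exact HeGA]. }
  intros a [Ha _] z z' Hz Hz' Fz Fz'.
  assert (Hr1 : 1 / (16 * G) <= 1) by (apply (Rdiv_le_1 1 (16 * G)); lra).
  assert (HD : G * Cmod (z - z') <= 1 / 8).
  { replace (z - z')%C with ((z - z0) + - (z' - z0))%C by ring.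
    pose proof (Cmod_triangle (z - z0) (- (z' - z0))) as Htri. rewrite Cmod_opp in Htri.
    replace (1 / 8) with (G * (2 * (1 / (16 * G)))) by (field; lra).
    apply Rmult_le_compat_l; lra. }
  assert (Hz'A : Cmod z' <= A).
  { unfold A. replace z' with (z0 + (z' - z0))%C at 1 by ring.
    eapply Rle_trans; [apply Cmod_triangle|]. lra. }
  pose proof (exp_poly_sub_lower d gam b beta a z z' G A delta HGbeta HGgam
                (fun i Hi => Rlt_le _ _ (Ha i Hi)) Hz'A HD) as Hlow.
  rewrite Fz, Fz' in Hlow. replace (RtoC 0 - RtoC 0)%C with (RtoC 0) in Hlow by ring.
  rewrite Cmod_0 in Hlow. fold K in Hlow.
  pose proof (Cmod_ge_0 (z - z')).
  assert (HD0 : Cmod (z - z') = 0) by nra.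
  apply Cmod_eq_0 in HD0.
  replace z with ((z - z') + z')%C by ring. rewrite HD0. ring.
Qed.

Lemma shift_cube d rho a t i k :
  cube d rho a -> (i < d)%nat -> Rabs t < rho - Cmod (a i) -> cube d rho (Defs.shift a t i k).
Proof.
  intros [Hin Hout] Hi Ht. unfold Defs.shift, dir. split; intros j Hj;
    destruct (Nat.eqb_spec j i) as [->|Hne].
  - eapply Rle_lt_trans; [apply Cmod_triangle|]. rewrite Cmod_mult, Cmod_R.
    destruct k; [rewrite Cmod_Ci | rewrite Cmod_1]; lra.
  - rewrite Cmult_0_r, Cplus_0_r. auto.
  - lia.
  - rewrite Cmult_0_r, Cplus_0_r. auto.
Qed.

(* A partial derivative at a point of the open cube only sees a neighbourhood of that point. *)
Lemma iterD_local d rho F G :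
  (forall a, cube d rho a -> F a = G a) ->
  forall vs, dirs_ok d vs -> forall a, cube d rho a -> iterD vs F a = iterD vs G a.
Proof.
  intros HFG vs. induction vs as [|[i k] ws IH]; intros Hok a Ha; simpl; auto.
  inversion Hok as [|? ? Hi Hws]; subst; simpl in Hi.
  assert (Hloc : locally 0 (fun t => cube d rho (Defs.shift a t i k))).
  { assert (Hgap : 0 < rho - Cmod (a i)) by (destruct Ha as [Hin _]; specialize (Hin i Hi); lra).
    exists (mkposreal _ Hgap). intros t Ht. apply shift_cube; auto.
    change (Rabs (t - 0) < rho - Cmod (a i)) in Ht. rewrite Rminus_0_r in Ht. exact Ht. }
  unfold pd; simpl. f_equal; apply Derive_ext_loc; eapply filter_imp; try exact Hloc;
    intros t Ht; simpl; rewrite IH; auto.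
Qed.

Lemma same_taylor0_of_near0 d F G : near0 d (fun a => F a = G a) -> same_taylor0 d F G.
Proof.
  intros [rho [Hrho HFG]] vs Hvs. apply (iterD_local d rho); auto using cube_vzero.
Qed.

(* The second clause says that [f] is continuous at [a = 0] with value [z0]. *)
Definition exp_root_branch (d : nat) (gam : nat -> C) (b beta z0 : C)
  (f : (nat -> C) -> C) : Prop :=
  near0 d (fun a => exp_poly d gam b beta a (f a) = RtoC 0) /\
  forall r, 0 < r -> near0 d (fun a => Cmod (f a - z0) < r).

Lemma is_phi_exp_root_branch d gam b beta alpha phi :
  is_phi d gam b beta alpha phi ->
  exp_root_branch d gam b beta (Llog alpha) (fun a => Llog (phi a)).
Proof.
  intros [eps [Heps [Hsmooth [H0 Heq]]]]. split; [exists eps; split; assumption|].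
  intros r Hr.
  destruct (proj1 (Hsmooth nil (Forall_nil _)) vzero (cube_vzero d eps Heps) r Hr)
    as [delta [Hdelta Hcont]].
  exists (Rmin eps delta). split; [apply Rmin_glb_lt; assumption|].
  intros a Ha. rewrite <- H0. apply Hcont.
  - eapply cube_mono; [apply Rmin_l | exact Ha].
  - intros i Hi. unfold vzero. replace (a i - RtoC 0)%C with (a i) by ring.
    destruct Ha as [Hin _]. eapply Rlt_le_trans; [apply Hin, Hi | apply Rmin_r].
Qed.

Lemma exp_poly_vscal d gam b beta c a z :
  exp_poly d (vscal c gam) b (c * beta) a z = exp_poly d gam b beta a (c * z).
Proof.
  unfold exp_poly, vscal. rewrite Cmult_assoc, (Cmult_comm beta c), <- Cmult_assoc.
  f_equal. apply csum_ext. intros i _. do 2 f_equal. ring.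
Qed.

Lemma exp_root_branch_scale d gam b beta z0 c f :
  exp_root_branch d (vscal c gam) b (c * beta) z0 f ->
  exp_root_branch d gam b beta (c * z0) (fun a => c * f a)%C.
Proof.
  intros [Hroot Hcont]. split.
  - revert Hroot. apply near0_impl. intros a Ha. rewrite <- exp_poly_vscal. exact Ha.
  - intros r Hr. pose proof (Cmod_ge_0 c).
    apply (near0_impl d (fun a => Cmod (f a - z0) < r / (Cmod c + 1))).
    + intros a Ha. replace (c * f a - c * z0)%C with (c * (f a - z0))%C by ring.
      rewrite Cmod_mult. pose proof (Cmod_ge_0 (f a - z0)).
      assert (Cmod c * Cmod (f a - z0) <= Cmod c * (r / (Cmod c + 1)))
        by (apply Rmult_le_compat_l; lra).
      assert (Cmod c * (r / (Cmod c + 1)) < r).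
      { apply (Rmult_lt_reg_r (Cmod c + 1)); [lra|].
        field_simplify; lra. }
      lra.
    + apply Hcont, Rdiv_lt_0_compat; lra.
Qed.

Lemma exp_root_branch_unique d gam b beta z0 f g :
  b <> RtoC 0 -> beta <> RtoC 0 ->
  exp_root_branch d gam b beta z0 f -> exp_root_branch d gam b beta z0 g ->
  near0 d (fun a => f a = g a).
Proof.
  intros Hb Hbeta [Hf Hfc] [Hg Hgc].
  destruct (exp_poly_root_locally_unique d gam b beta z0 Hb Hbeta) as [r [Hr Huniq]].
  generalize (near0_and d _ _ Huniq (near0_and d _ _ (near0_and d _ _ Hf Hg)
                                       (near0_and d _ _ (Hfc r Hr) (Hgc r Hr)))).
  apply near0_impl. intros a [Hu [[Hfa Hga] [Hfr Hgr]]]. exact (Hu _ _ Hfr Hgr Hfa Hga).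
Qed.

Theorem theorem4p1 (d : nat) (gamma : nat -> C) (b beta1 beta2 : C)
  (alpha1 alpha2 : Lpt) (phi1 phi2 : (nat -> C) -> Lpt) :
  (1 <= d)%nat ->
  b <> RtoC 0 -> beta1 <> RtoC 0 -> beta2 <> RtoC 0 ->
  (RtoC 1 + b * Lpow alpha1 beta1)%C = RtoC 0 ->
  is_phi d gamma b beta1 alpha1 phi1 ->
  Llog alpha2 = (/ beta2 * Llog alpha1)%C ->
  is_phi d (vscal beta2 gamma) b (beta2 * beta1)%C alpha2 phi2 ->
  same_taylor0 d (fun a => Lpow (phi1 a) (/ beta2)%C)
                 (fun a => Lpow (phi2 a) (RtoC 1)).
Proof.
  intros _ Hb Hbeta1 Hbeta2 _ Hphi1 Hlog Hphi2.
  pose proof (is_phi_exp_root_branch _ _ _ _ _ _ Hphi1) as Hbranch1.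
  pose proof (exp_root_branch_scale _ _ _ _ _ _ _ (is_phi_exp_root_branch _ _ _ _ _ _ Hphi2))
    as Hbranch2.
  replace (beta2 * Llog alpha2)%C with (Llog alpha1) in Hbranch2
    by (rewrite Hlog; field; exact Hbeta2).
  apply same_taylor0_of_near0.
  generalize (exp_root_branch_unique _ _ _ _ _ _ _ Hb Hbeta1 Hbranch1 Hbranch2).
  apply near0_impl. intros a Heq. unfold Lpow. rewrite Heq. f_equal. field. exact Hbeta2.
Qed.
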